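(* Let $k\ge1$, let $t_1\ge t_2\ge\cdots\ge t_k\ge 1$ be integers, set $t_{k+1}=0$ and $n=\sum_{i=1}^k t_i$, and let \[ A_0+\lambda E_0=\begin{bmatrix}\lambda E_{1,1} & A_{1,2} & & \\ & \ddots & \ddots & \\ & & \lambda E_{k-1,k-1} & A_{k-1,k}\\ & & & \lambda E_{k,k}\end{bmatrix}\in\mathbb{C}[\lambda]^{n\times n} \] be a block bidiagonal pencil with block rows and block columns of sizes $t_1,\dots,t_k$ (unmarked blocks zero), where $E_{i,i}\in\mathbb{C}^{t_i\times t_i}$ and $A_{i,i+1}=\begin{bmatrix}\hat A_{i,i+1}\\0\end{bmatrix}\in\mathbb{C}^{t_i\times t_{i+1}}$ with $\hat A_{i,i+1}\in\mathbb{C}^{t_{i+1}\times t_{i+1}}$, and both $\hat A_{i,i+1}$ and $E_{i,i}$ invertible upper triangular. Let $\hat Z_i:=-E_{i,i}^{-1}A_{i,i+1}\in\mathbb{C}^{t_i\times t_{i+1}}$ for $i=1,\dots,k-1$. For $j=1,\dots,k$ let $X_j(\lambda)\in\mathbb{C}[\lambda]^{n\times t_j}$ be the block vector whose $\ell$-th block ($\ell=1,\dots,j$) is $\lambda^{\ell-1}\hat Z_\ell\hat Z_{\ell+1}\cdots\hat Z_{j-1}$ (for $\ell=j$ this is $\lambda^{j-1}I_{t_j}$) and whose blocks $j+1,\dots,k$ are zero, and let $Q_j(\lambda):=X_j(\lambda)\,[e_{t_{j+1}+1}\ \cdots\ e_{t_j}]\in\mathbb{C}[\lambda]^{n\times(t_j-t_{j+1})}$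 consist of the rightmost $t_j-t_{j+1}$ columns of $X_j(\lambda)$ (here $e_p$ denotes the $p$-th standard basis vector of $\mathbb{C}^{t_j}$). Then the only eigenvalue of $A_0+\lambda E_0$ is $\lambda=0$, and the columns of $Q_k(\lambda),Q_{k-1}(\lambda),\dots,Q_1(\lambda)$ together form a maximal set of root polynomials at $0$ for $A_0+\lambda E_0$.
   Context: An eigenvalue of a pencil $P(\lambda)$ is $\mu\in\mathbb{C}$ with $\operatorname{rank}_{\mathbb{C}}P(\mu)$ smaller than its rank over $\mathbb{C}(\lambda)$. Let $N(\lambda)$ be a right minimal basis of $P$ (a polynomial basis of $\{x\in\mathbb{C}(\lambda)^n:Px=0\}$ with minimal sum of column degrees; empty if $P$ is regular). For $k\ge1$, a polynomial vector $x$ is a zero direction of order $k$ at $\lambda_0$ if $x(\lambda_0)\ne0$ and $P(\lambda)x(\lambda)=(\lambda-\lambda_0)^kw(\lambda)$ with $w$ polynomial, $w(\lambda_0)\ne0$; it is a root polynomial of order $k$ if moreover $[N(\lambda_0)\ x(\lambda_0)]$ has full column rank. Zero directions $r_1,\dots,r_s$ of orders $k_1,\dots,k_s$ are $\lambda_0$-independent if $[N(\lambda_0)\ r_1(\lambda_0)\cdots r_s(\lambda_0)]$ has full column rank; such a set is complete if no larger $\lambda_0$-independent set exists; it is ordered if $k_1\ge\cdots\ge k_s>0$; a complete ordered set is maximal if for no $j$ is there a root polynomial $\tilde r$ of order $k>k_j$ with $[N(\lambda_0)\ r_1(\lambda_0)\cdots r_{j-1}(\lambda_0)\ \tilde r(\lambda_0)]$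 of full column rank. (The columns of $Q_j$ have order $j$, so listing $Q_k,\dots,Q_1$ gives non-increasing orders.) *)

From HB Require Import structures.
From mathcomp Require Import all_boot all_order all_algebra.
Set Implicit Arguments. Unset Strict Implicit. Unset Printing Implicit Defensive.
Import Order.TTheory GRing.Theory Num.Theory.
Local Open Scope ring_scope.

Section PencilDefs.
Variable C : numClosedFieldType.
Local Notation P := {poly C}.
Local Notation K := {fraction {poly C}}.

Definition tofracP (p : P) : K := @FracField.tofrac {poly C} p.

Definition rankF m n (M : 'M[P]_(m, n)) : nat := \rank (map_mx tofracP M).

Definition evalmx m n (M : 'M[P]_(m, n)) (mu : C) : 'M[C]_(m, n) :=
  map_mx (fun p => p.[mu]) M.

Definition is_eigenvalue m n (M : 'M[P]_(m, n)) (mu : C) : Prop :=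
  (\rank (evalmx M mu) < rankF M)%N.

Definition coldeg n p (N : 'M[P]_(n, p)) (j : 'I_p) : nat :=
  (\max_(i < n) size (N i j)).-1.
Definition sumcoldeg n p (N : 'M[P]_(n, p)) : nat := \sum_(j < p) coldeg N j.

Definition is_poly_kernel_basis m n p (M : 'M[P]_(m, n)) (N : 'M[P]_(n, p)) :=
  [/\ M *m N = 0, rankF N = p & (p + rankF M)%N = n].

Definition is_right_minimal_basis m n p (M : 'M[P]_(m, n)) (N : 'M[P]_(n, p)) :=
  is_poly_kernel_basis M N /\
  forall N' : 'M[P]_(n, p), is_poly_kernel_basis M N' ->
    (sumcoldeg N <= sumcoldeg N')%N.

Definition zero_direction m n (M : 'M[P]_(m, n)) (l0 : C) (x : 'cV[P]_n)
    (k : nat) : Prop :=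
  [/\ (1 <= k)%N, evalmx x l0 != 0 &
      exists w : 'cV[P]_m,
        M *m x = ('X - l0%:P) ^+ k *: w /\ evalmx w l0 != 0].

Definition full_col_rank m n (B : 'M[C]_(m, n)) : Prop := \rank B = n.

Definition root_polynomial m n p (M : 'M[P]_(m, n)) (N : 'M[P]_(n, p))
    (l0 : C) (x : 'cV[P]_n) (k : nat) : Prop :=
  zero_direction M l0 x k /\ full_col_rank (evalmx (row_mx N x) l0).

Definition zero_directions m n s (M : 'M[P]_(m, n)) (l0 : C)
    (R : 'M[P]_(n, s)) (ord : 'I_s -> nat) : Prop :=
  forall i : 'I_s, zero_direction M l0 (col i R) (ord i).

Definition l0_independent m n p s (M : 'M[P]_(m, n)) (N : 'M[P]_(n, p))
    (l0 : C) (R : 'M[P]_(n, s)) (ord : 'I_s -> nat) : Prop :=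
  zero_directions M l0 R ord /\ full_col_rank (evalmx (row_mx N R) l0).

Definition complete_set m n p s (M : 'M[P]_(m, n)) (N : 'M[P]_(n, p))
    (l0 : C) (R : 'M[P]_(n, s)) (ord : 'I_s -> nat) : Prop :=
  l0_independent M N l0 R ord /\
  forall s' (R' : 'M[P]_(n, s')) (ord' : 'I_s' -> nat),
    l0_independent M N l0 R' ord' -> (s' <= s)%N.

Definition ordered_set s (ord : 'I_s -> nat) : Prop :=
  (forall i j : 'I_s, (i <= j)%N -> (ord j <= ord i)%N) /\
  (forall i, 0 < ord i)%N.

Definition first_cols n s (R : 'M[P]_(n, s)) (j : 'I_s) : 'M[P]_(n, j) :=
  colsub (fun c : 'I_j => widen_ord (ltnW (ltn_ord j)) c) R.

Definition maximal_set m n p s (M : 'M[P]_(m, n)) (N : 'M[P]_(n, p))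
    (l0 : C) (R : 'M[P]_(n, s)) (ord : 'I_s -> nat) : Prop :=
  [/\ complete_set M N l0 R ord, ordered_set ord &
      forall j : 'I_s, ~ exists (x : 'cV[P]_n) (kk : nat),
        [/\ root_polynomial M N l0 x kk, (ord j < kk)%N &
            full_col_rank (evalmx (row_mx N (row_mx (first_cols R j) x)) l0)]].

(* entry of a matrix accessed with natural-number indices (0 out of range) *)
Definition ent (T : nmodType) m n (B : 'M[T]_(m, n)) (r c : nat) : T :=
  match @insub _ (fun x => x < m)%N _ r, @insub _ (fun x => x < n)%N _ c with
  | Some r', Some c' => B r' c'
  | _, _ => 0
  end.

(* the block sizes are t 1, ..., t k (1-indexed) *)
Definition nsum (t : nat -> nat) (k : nat) : nat := (\sum_(1 <= i < k.+1) t i)%N.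
(* 0-based starting position of block i *)
Definition boff (t : nat -> nat) (i : nat) : nat := (\sum_(1 <= l < i) t l)%N.
(* index (in 1..k) of the block containing global position g *)
Definition blk (t : nat -> nat) (k g : nat) : nat :=
  (\max_(i < k.+1 | (0 < i) && (boff t i <= g)) i)%N.
Definition loc (t : nat -> nat) (k g : nat) : nat := (g - boff t (blk t k g))%N.

(* A_{i,i+1} = [Ahat_{i,i+1}; 0] *)
Definition Ablk (t : nat -> nat) (Ahat : forall i, 'M[C]_(t i.+1)) (i : nat)
  : 'M[C]_(t i, t i.+1) := \matrix_(r < t i, c < t i.+1) ent (Ahat i) r c.

Definition E0mx (t : nat -> nat) k (E : forall i, 'M[C]_(t i))
  : 'M[C]_(nsum t k) :=
  \matrix_(g, h) (if blk t k g == blk t k h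
                  then ent (E (blk t k g)) (loc t k g) (loc t k h) else 0).

Definition A0mx (t : nat -> nat) k (Ahat : forall i, 'M[C]_(t i.+1))
  : 'M[C]_(nsum t k) :=
  \matrix_(g, h) (if blk t k h == (blk t k g).+1
                  then ent (Ablk Ahat (blk t k g)) (loc t k g) (loc t k h) else 0).

Definition pencil (t : nat -> nat) k (E : forall i, 'M[C]_(t i))
    (Ahat : forall i, 'M[C]_(t i.+1)) : 'M[P]_(nsum t k) :=
  map_mx polyC (A0mx k Ahat) + 'X *: map_mx polyC (E0mx k E).

Definition Zhat (t : nat -> nat) (E : forall i, 'M[C]_(t i))
    (Ahat : forall i, 'M[C]_(t i.+1)) (i : nat) : 'M[C]_(t i, t i.+1) :=
  - (invmx (E i) *m Ablk Ahat i).

(* Zprod l d = Zhat_l Zhat_{l+1} ... Zhat_{l+d-1} (identity if d = 0) *)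
Fixpoint Zprod (t : nat -> nat) (E : forall i, 'M[C]_(t i))
    (Ahat : forall i, 'M[C]_(t i.+1)) (l d : nat) : 'M[C]_(t l, t (d + l)) :=
  match d with
  | 0 => 1%:M
  | d'.+1 => Zprod E Ahat l d' *m Zhat E Ahat (d' + l)
  end.

(* X_j(lambda): block l (1 <= l <= j) is lambda^(l-1) Zhat_l ... Zhat_{j-1} *)
Definition Xmat (t : nat -> nat) k (E : forall i, 'M[C]_(t i))
    (Ahat : forall i, 'M[C]_(t i.+1)) (j : nat) : 'M[P]_(nsum t k, t j) :=
  \matrix_(g, c) (let l := blk t k g in
                  if (l <= j)%N
                  then 'X ^+ (l.-1) * (ent (Zprod E Ahat l (j - l)) (loc t k g) c)%:P
                  else 0).

(* Q_j(lambda): the rightmost t_j - t_{j+1} columns of X_j *)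
Definition Qmat (t : nat -> nat) k (E : forall i, 'M[C]_(t i))
    (Ahat : forall i, 'M[C]_(t i.+1)) (j : nat)
  : 'M[P]_(nsum t k, t j - t j.+1) :=
  \matrix_(g, c) ent (Xmat k E Ahat j) g (c + t j.+1).

(* position c (0-based, c < t 1) of [Q_k Q_{k-1} ... Q_1] lies in Q_(qblk c) *)
Definition qblk (t : nat -> nat) k (c : nat) : nat :=
  (\max_(j < k.+1 | (0 < j) && (c < t j)) j)%N.

(* the concatenation [Q_k(lambda) Q_{k-1}(lambda) ... Q_1(lambda)] *)
Definition Qcat (t : nat -> nat) k (E : forall i, 'M[C]_(t i))
    (Ahat : forall i, 'M[C]_(t i.+1)) : 'M[P]_(nsum t k, t 1%N) :=
  \matrix_(g, c) (let j := qblk t k c in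
                  ent (Qmat k E Ahat j) g (c - t j.+1)).

(* the order attached to each column: columns of Q_j have order j *)
Definition Qord (t : nat -> nat) k (c : 'I_(t 1%N)) : nat := qblk t k c.

Definition upper_tri m (B : 'M[C]_m) : Prop :=
  forall i j : 'I_m, (j < i)%N -> B i j = 0.

End PencilDefs.

From HB Require Import structures.
From mathcomp Require Import all_boot all_order all_algebra.
From mathcomp Require Import zify.
Set Implicit Arguments. Unset Strict Implicit. Unset Printing Implicit Defensive.
Import Order.TTheory GRing.Theory Num.Theory.
Local Open Scope ring_scope.

(* For mu <> 0 the matrix A0 + mu E0 is block upper triangular with invertible
   diagonal blocks mu E_ii, so it is nonsingular, and so is the pencil over
   C(lambda): the right minimal basis is empty, and since the last block row of
   A0 vanishes, 0 is the only eigenvalue.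
   Because E_ii Zhat_i = - A_{i,i+1}, the block rows of (A0 + lambda E0) X_j
   telescope, leaving lambda^j E_jj in block j alone; so each column of Q_j is a
   zero direction of order j. At lambda = 0 only the first block of
   [Q_k ... Q_1] survives, and it is upper triangular with nonzero diagonal.
   Conversely a zero direction x has A0 x(0) = 0, which confines x(0) to the
   first t_1 coordinates (completeness). If its order exceeds the order q of
   column c of [Q_k ... Q_1], comparing the coefficients of lambda^l in block
   rows l <= q and back-substituting through the triangular E_ll and A_{l,l+1}
   shows that x(0) vanishes from coordinate t_{q+1} <= c on; the first c
   columns of [Q_k ... Q_1] vanish at 0 from coordinate c on as well, so x(0)
   cannot extend them (maximality). *)

Section Entries.
Variable T : nmodType.
Implicit Types m n : nat.

Lemma ent_ord m n (B : 'M[T]_(m, n)) (i : 'I_m) (j : 'I_n) : ent B i j = B i j.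
Proof.
rewrite /ent; case: insubP => [i' _ /val_inj -> |]; last by rewrite ltn_ord.
by case: insubP => [j' _ /val_inj -> |]; last by rewrite ltn_ord.
Qed.

Lemma ent_nat m n (B : 'M[T]_(m, n)) r c (hr : (r < m)%N) (hc : (c < n)%N) :
  ent B r c = B (Ordinal hr) (Ordinal hc).
Proof. by rewrite -ent_ord. Qed.

Lemma ent_row_oob m n (B : 'M[T]_(m, n)) r c : (m <= r)%N -> ent B r c = 0.
Proof. by move=> hr; rewrite /ent; case: insubP => // u; rewrite ltnNge hr. Qed.

Lemma ent_col_oob m n (B : 'M[T]_(m, n)) r c : (n <= c)%N -> ent B r c = 0.
Proof.
move=> hc; rewrite /ent; case: insubP => // u _ _.
by case: insubP => // v; rewrite ltnNge hc.
Qed.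

Lemma ent0 m n r c : ent (0 : 'M[T]_(m, n)) r c = 0.
Proof.
case: (ltnP r m) => hr; last exact: ent_row_oob.
case: (ltnP c n) => hc; last exact: ent_col_oob.
by rewrite (ent_nat _ hr hc) mxE.
Qed.

Lemma ent_col m n (B : 'M[T]_(m, n)) (c : 'I_n) r : ent (col c B) r 0 = ent B r c.
Proof.
case: (ltnP r m) => hr; last by rewrite !ent_row_oob.
by rewrite (ent_nat _ hr (ltn0Sn 0)) mxE -ent_ord.
Qed.

End Entries.

Lemma entN (R : zmodType) m n (B : 'M[R]_(m, n)) r c : ent (- B) r c = - ent B r c.
Proof.
case: (ltnP r m) => hr; last by rewrite !ent_row_oob // oppr0.
case: (ltnP c n) => hc; last by rewrite !ent_col_oob // oppr0.
by rewrite !(ent_nat _ hr hc) mxE.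
Qed.

Lemma entZ (R : pzSemiRingType) m n (a : R) (B : 'M[R]_(m, n)) r c :
  ent (a *: B) r c = a * ent B r c.
Proof.
case: (ltnP r m) => hr; last by rewrite !ent_row_oob // mulr0.
case: (ltnP c n) => hc; last by rewrite !ent_col_oob // mulr0.
by rewrite !(ent_nat _ hr hc) mxE.
Qed.

Lemma ent_scalar1 (R : pzSemiRingType) m r c :
  ent (1%:M : 'M[R]_m) r c = ((r == c) && (r < m)%N)%:R.
Proof.
case: (ltnP r m) => hr; last by rewrite ent_row_oob // andbF.
case: (ltnP c m) => hc; last by rewrite ent_col_oob //; case: eqP => // rc; lia.
by rewrite (ent_nat _ hr hc) mxE andbT.
Qed.

Lemma ent_mul (R : pzSemiRingType) m n p (A : 'M[R]_(m, n)) (B : 'M[R]_(n, p)) r c :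
  ent (A *m B) r c = \sum_(s < n) ent A r s * ent B s c.
Proof.
case: (ltnP r m) => hr; last first.
  by rewrite ent_row_oob // big1 // => s _; rewrite ent_row_oob // mul0r.
case: (ltnP c p) => hc; last first.
  by rewrite ent_col_oob // big1 // => s _; rewrite (ent_col_oob _ _ hc) mulr0.
rewrite ent_nat mxE; apply: eq_bigr => s _.
by rewrite -(ent_ord A (Ordinal hr)) -(ent_ord B _ (Ordinal hc)).
Qed.

Section UpperEntries.
Variable R : pzSemiRingType.

Definition ent_upper m n (B : 'M[R]_(m, n)) :=
  forall r c, (c < r)%N -> ent B r c = 0.

Lemma ent_upper_mul m n p (A : 'M[R]_(m, n)) (B : 'M[R]_(n, p)) :
  ent_upper A -> ent_upper B -> ent_upper (A *m B).
Proof.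
move=> uA uB r c hcr; rewrite ent_mul big1 // => s _.
case: (ltnP s r) => hsr; first by rewrite uA // mul0r.
by rewrite uB ?mulr0 //; apply: leq_trans hcr hsr.
Qed.

Lemma ent_upper_mul_diag m n p (A : 'M[R]_(m, n)) (B : 'M[R]_(n, p)) c :
  ent_upper A -> ent_upper B -> (c < n)%N ->
  ent (A *m B) c c = ent A c c * ent B c c.
Proof.
move=> uA uB hc; rewrite ent_mul (bigD1 (Ordinal hc)) //= big1 ?addr0 // => s.
rewrite -(inj_eq val_inj) /= neq_ltn => /orP [hsc | hcs].
  by rewrite uA // mul0r.
by rewrite uB // mulr0.
Qed.

Lemma ent_upper_scalar1 m : ent_upper (1%:M : 'M[R]_m).
Proof. by move=> r c hcr; rewrite ent_scalar1 (_ : (r == c) = false) //; lia. Qed.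

End UpperEntries.

Lemma down_ind (P : nat -> Prop) a m :
  P m -> (forall l, (a <= l < m)%N -> P l.+1 -> P l) ->
  forall l, (a <= l <= m)%N -> P l.
Proof.
move=> Pm IH l /andP [hal hlm].
have [d ld] : exists d, l = (m - d)%N by exists (m - l)%N; rewrite subKn.
subst l; elim: d hal {hlm} => [|d IHd] had; first by rewrite subn0.
have [hdm | hmd] := ltnP d m.
  apply: IH; first by lia.
  by rewrite (_ : (m - d.+1).+1 = m - d)%N; [apply: IHd |]; lia.
by rewrite (_ : m - d.+1 = m - d)%N; [apply: IHd |]; lia.
Qed.

Lemma upper_trig_solve_tail (F : idomainType) m (U : 'M[F]_m) (y : 'I_m -> F) T :
  (forall i j : 'I_m, (j < i)%N -> U i j = 0) -> (forall i, U i i != 0) ->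
  (forall r : 'I_m, (T <= r)%N -> \sum_s U r s * y s = 0) ->
  forall s : 'I_m, (T <= s)%N -> y s = 0.
Proof.
move=> Ulow Udiag Uy.
suff tail : forall l, (0 <= l <= m)%N ->
    forall s : 'I_m, (l <= s)%N -> (T <= s)%N -> y s = 0.
  by move=> s; apply: (tail 0%N).
apply: down_ind.
  by move=> s; rewrite leqNgt ltn_ord.
move=> l _ IH s hls hTs; case: (ltnP l s) => hs; first exact: IH.
have /eqP := Uy s hTs; rewrite (bigD1 s) //= big1 ?addr0.
  by rewrite mulf_eq0 (negPf (Udiag s)) => /eqP.
move=> j; rewrite -(inj_eq val_inj) /= neq_ltn => /orP [hjs | hsj].
  by rewrite Ulow // mul0r.
by rewrite IH ?mulr0 //; lia.
Qed.

Section Rank.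
Variable F : fieldType.

Lemma mxrank_col_inj m s (B : 'M[F]_(m, s)) :
  (forall v : 'cV_s, B *m v = 0 -> v = 0) -> \rank B = s.
Proof.
move=> Binj; rewrite -mxrank_tr; apply/eqP; change (row_free B^T); rewrite -kermx_eq0.
apply/eqP/row_matrixP => i; rewrite row0; apply: trmx_inj; rewrite trmx0.
by apply: Binj; rewrite -[B in B *m _]trmxK -trmx_mul -row_mul mulmx_ker row0 trmx0.
Qed.

Lemma mxrank_zero_rows m s (B : 'M[F]_(m, s)) c :
  (forall (i : 'I_m) (j : 'I_s), (c <= i)%N -> B i j = 0) -> (\rank B <= c)%N.
Proof.
move=> Bc; have [hcm | hmc] := leqP c m; last first.
  exact: leq_trans (rank_leq_row B) (ltnW hmc).
have -> : B = pid_mx c *m B.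
  apply/matrixP => i j; rewrite mxE (bigD1 i) //= big1 ?addr0.
    by rewrite mxE eqxx /=; have [hi|hi] := ltnP i c; rewrite ?mul1r // mul0r Bc.
  by move=> l hl; rewrite mxE (inj_eq val_inj) eq_sym (negPf hl) mul0r.
by apply: leq_trans (mxrankM_maxl _ _) _; rewrite rank_pid_mx.
Qed.

End Rank.

Lemma evalmx_ent (C : numClosedFieldType) m n (M : 'M[{poly C}]_(m, n)) mu i j :
  evalmx M mu i j = (ent M i j).[mu].
Proof. by rewrite mxE ent_ord. Qed.

Section UpperTriangular.
Variable C : numClosedFieldType.

Lemma upper_tri_ent m (U : 'M[C]_m) : upper_tri U -> ent_upper U.
Proof.
move=> uU r c hcr; case: (ltnP r m) => hr; last exact: ent_row_oob.
by rewrite (ent_nat _ hr (ltn_trans hcr hr)) uU.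
Qed.

Lemma upper_tri_unit_diag m (U : 'M[C]_m) :
  upper_tri U -> U \in unitmx -> forall i, U i i != 0.
Proof.
move=> uU; rewrite unitmxE unitfE -det_tr det_trig; last first.
  by apply/is_trig_mxP => i j hij; rewrite mxE uU.
by move=> /prodf_neq0 diag i; have := diag i isT; rewrite mxE.
Qed.

Lemma invmx_upper_tri m (U : 'M[C]_m) : upper_tri U -> U \in unitmx ->
  ent_upper (invmx U) /\ forall c, (c < m)%N -> ent (invmx U) c c != 0.
Proof.
move=> uU Uunit; have UV := mulmxV Uunit.
have uV : ent_upper (invmx U).
  move=> r c hcr; case: (ltnP r m) => hr; last exact: ent_row_oob.
  have hc := ltn_trans hcr hr; rewrite (ent_nat _ hr hc).
  apply: (upper_trig_solve_tail (y := fun s => invmx U s (Ordinal hc)) (T := c.+1)).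
  - exact: uU.
  - exact: upper_tri_unit_diag.
  - move=> r' hr'; have /matrixP/(_ r' (Ordinal hc)) := UV; rewrite !mxE => ->.
    by rewrite -(inj_eq val_inj) /=; case: eqP => //; lia.
  - exact: hcr.
split=> // c hc; have := ent_upper_mul_diag (upper_tri_ent uU) uV hc.
rewrite UV ent_scalar1 eqxx hc => diag; apply/eqP => V0.
by move: diag; rewrite V0 mulr0; apply/eqP; rewrite oner_neq0.
Qed.

End UpperTriangular.

Lemma big_nat_ifeq (R : nmodType) a b i (F : nat -> R) :
  \sum_(a <= j < b) (if j == i then F j else 0) = if (a <= i < b)%N then F i else 0.
Proof.
case: ifP => hi.
  rewrite (bigD1_seq i) ?mem_index_iota ?iota_uniq //= eqxx big1 ?addr0 //.
  by move=> j /negPf ->.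
by rewrite big_nat big1 // => j hj; case: eqP => // ji; move: hi; rewrite -ji hj.
Qed.

Section BlockIndices.
Variable t : nat -> nat.

Lemma boff1 : boff t 1 = 0%N. Proof. by rewrite /boff big_geq. Qed.

Lemma boffS l : (1 <= l)%N -> boff t l.+1 = (boff t l + t l)%N.
Proof. by move=> hl; rewrite /boff big_nat_recr. Qed.

Lemma leq_boff i j : (i <= j)%N -> (boff t i <= boff t j)%N.
Proof.
case: i => [|i] hij; first by rewrite /boff big_geq.
by rewrite /boff (big_cat_nat _ hij) //= leq_addr.
Qed.

Lemma boff_lt_nsum k l s : (1 <= l <= k)%N -> (s < t l)%N -> (boff t l + s < nsum t k)%N.
Proof.
move=> hl hs; have := @leq_boff l.+1 k.+1; rewrite boffS; last by lia.
by move=> /(_ ltac:(lia)); apply: leq_trans; rewrite ltn_add2l.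
Qed.

Lemma boff_decomp K g : (g < boff t K.+1)%N ->
  exists l s, [/\ (1 <= l <= K)%N, (s < t l)%N & g = (boff t l + s)%N].
Proof.
elim: K => [|K IH]; first by rewrite boff1.
rewrite boffS //; case: (ltnP g (boff t K.+1)) => [/IH [l [s [hl hs ->]]] _ | hg hgK].
  by exists l, s; split=> //; lia.
by exists K.+1, (g - boff t K.+1)%N; split; lia.
Qed.

Lemma sum_blocks (R : nmodType) K (F : nat -> R) :
  \sum_(g < boff t K.+1) F g = \sum_(1 <= l < K.+1) \sum_(s < t l) F (boff t l + s)%N.
Proof.
elim: K => [|K IH]; first by rewrite boff1 big_ord0 big_geq.
by rewrite big_nat_recr //= -IH boffS // big_split_ord.
Qed.

Lemma blk_boff k l s : (1 <= l <= k)%N -> (s < t l)%N -> blk t k (boff t l + s)%N = l.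
Proof.
move=> hl hs; apply/eqP; rewrite eqn_leq; apply/andP; split.
  apply/bigmax_leqP => i /andP [hi hb]; rewrite leqNgt; apply/negP => hli.
  by have := leq_boff hli; rewrite boffS; lia.
have hl' : (l < k.+1)%N by lia.
by apply: (leq_bigmax_cond (Ordinal hl')); rewrite /= leq_addr andbT; lia.
Qed.

Lemma loc_boff k l s : (1 <= l <= k)%N -> (s < t l)%N -> loc t k (boff t l + s)%N = s.
Proof. by move=> hl hs; rewrite /loc blk_boff // addKn. Qed.

Lemma qblk_spec k c : (1 <= k)%N -> t k.+1 = 0%N -> (c < t 1)%N ->
  [/\ (1 <= qblk t k c <= k)%N, (c < t (qblk t k c))%N & (t (qblk t k c).+1 <= c)%N].
Proof.
move=> hk htk1 hc; pose Pc := fun j : 'I_k.+1 => (0 < j)%N && (c < t j)%N.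
have Pc_max j : Pc j -> (j <= qblk t k c)%N by exact: leq_bigmax_cond.
have [|j0 /andP [j0pos hcj0] qj0] := @eq_bigmax_cond _ Pc (fun j => nat_of_ord j).
  by apply/card_gt0P; exists (inord 1); rewrite /in_mem /= /Pc inordK //; lia.
change (qblk t k c = j0) in qj0.
rewrite qj0; split=> //; first by have := ltn_ord j0; lia.
have [j0k | kj0] := ltnP j0 k; last first.
  have j0E : j0 = k :> nat by have := ltn_ord j0; lia.
  by rewrite j0E htk1.
rewrite leqNgt; apply/negP => hcj1.
have := Pc_max (inord j0.+1); rewrite /Pc inordK; last by lia.
by rewrite hcj1 qj0 ltnn andbT => /(_ isT).
Qed.

Lemma qblk_mono k c1 c2 : (c1 <= c2)%N -> (qblk t k c2 <= qblk t k c1)%N.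
Proof.
move=> hc; apply/bigmax_leqP => j /andP [hj hc2].
by apply: leq_bigmax_cond; rewrite hj (leq_ltn_trans hc hc2).
Qed.

End BlockIndices.

Section Pencil.
Variables (C : numClosedFieldType) (k : nat) (t : nat -> nat).
Variables (E : forall i, 'M[C]_(t i)) (Ahat : forall i, 'M[C]_(t i.+1)).
Hypothesis k_gt0 : (1 <= k)%N.
Hypothesis t_decr : forall i, (1 <= i < k)%N -> (t i.+1 <= t i)%N.
Hypothesis tk_gt0 : (1 <= t k)%N.
Hypothesis tk1 : t k.+1 = 0%N.
Hypothesis E_upper_unit :
  forall i, (1 <= i <= k)%N -> upper_tri (E i) /\ E i \in unitmx.
Hypothesis A_upper_unit :
  forall i, (1 <= i < k)%N -> upper_tri (Ahat i) /\ Ahat i \in unitmx.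

Local Notation n := (nsum t k).
Local Notation bent v l s := (ent v (boff t l + s)%N 0).

Lemma E_diag l : (1 <= l <= k)%N -> forall i, E l i i != 0.
Proof. by move=> hl; have [uE Eunit] := E_upper_unit hl; apply: upper_tri_unit_diag. Qed.

Lemma A_diag l : (1 <= l < k)%N -> forall i, Ahat l i i != 0.
Proof. by move=> hl; have [uA Aunit] := A_upper_unit hl; apply: upper_tri_unit_diag. Qed.

Definition pencil_map (F : comNzRingType) (phi : C -> F) (b : F) : 'M[F]_n :=
  map_mx phi (A0mx k Ahat) + b *: map_mx phi (E0mx k E).

Lemma pencil_mapE : pencil k E Ahat = pencil_map polyC 'X.
Proof. by []. Qed.

Lemma evalmx_pencil mu : evalmx (pencil k E Ahat) mu = pencil_map id mu.
Proof.
by apply/matrixP => i j; rewrite !mxE hornerD hornerM hornerX !hornerC.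
Qed.

Lemma tofrac_pencil :
  map_mx (@tofracP C) (pencil k E Ahat) =
  pencil_map (fun x => tofracP x%:P) (tofracP 'X).
Proof. by apply/matrixP => i j; rewrite !mxE /tofracP rmorphD rmorphM. Qed.

Lemma pencil_map_ent (F : comNzRingType) (phi : C -> F) b l r l' s :
  (1 <= l <= k)%N -> (r < t l)%N -> (1 <= l' <= k)%N -> (s < t l')%N ->
  ent (pencil_map phi b) (boff t l + r)%N (boff t l' + s)%N =
  phi (if l' == l.+1 then ent (Ablk Ahat l) r s else 0) +
  b * phi (if l == l' then ent (E l) r s else 0).
Proof.
move=> hl hr hl' hs.
rewrite (ent_nat _ (boff_lt_nsum hl hr) (boff_lt_nsum hl' hs)) !mxE /=.
by rewrite !blk_boff // !loc_boff.
Qed.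

Lemma pencil_map_mul_blk (F : comNzRingType) (phi : C -> F) b (v : 'cV[F]_n) l r :
  phi 0 = 0 -> (1 <= l <= k)%N -> (r < t l)%N ->
  bent (pencil_map phi b *m v) l r =
  (if (l < k)%N then \sum_(s < t l.+1) phi (ent (Ablk Ahat l) r s) * bent v l.+1 s
   else 0) + b * \sum_(s < t l) phi (ent (E l) r s) * bent v l s.
Proof.
move=> phi0 hl hr.
rewrite ent_mul (sum_blocks t k (fun h => ent (pencil_map phi b) _ h * ent v h 0)).
have blk_sum l' : (1 <= l' < k.+1)%N ->
  \sum_(s < t l') ent (pencil_map phi b) (boff t l + r)%N (boff t l' + s)%N * bent v l' s =
  (if l' == l.+1 then \sum_(s < t l') phi (ent (Ablk Ahat l) r s) * bent v l' s else 0)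
  + (if l' == l then b * \sum_(s < t l') phi (ent (E l) r s) * bent v l' s else 0).
  move=> /andP [hl'1 hl'k]; have hl'' : (1 <= l' <= k)%N by lia.
  under eq_bigr => s _ do rewrite (pencil_map_ent _ _ hl hr hl'' (ltn_ord s)) mulrDl.
  rewrite big_split /=; congr (_ + _).
    by case: eqP => _ //; rewrite big1 // => s _; rewrite phi0 mul0r.
  rewrite eq_sym mulr_sumr; case: eqP => _; first by apply: eq_bigr => s _; rewrite mulrA.
  by rewrite big1 // => s _; rewrite phi0 mulr0 mul0r.
rewrite (eq_big_nat _ _ blk_sum) big_split /= !big_nat_ifeq.
have -> : (1 <= l.+1 < k.+1)%N = (l < k)%N by apply/idP/idP; lia.
by have -> : (1 <= l < k.+1)%N by lia.
Qed.

Lemma pencil_map_inj (F : fieldType) (phi : C -> F) b :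
  phi 0 = 0 -> (forall x, x != 0 -> phi x != 0) -> b != 0 ->
  forall v : 'cV[F]_n, pencil_map phi b *m v = 0 -> v = 0.
Proof.
move=> phi0 phi_neq0 b_neq0 v Mv0.
have blk0 l : (1 <= l <= k.+1)%N -> forall s, (s < t l)%N -> bent v l s = 0.
  apply: (down_ind (P := fun l => forall s, (s < t l)%N -> bent v l s = 0)).
    by move=> s; rewrite tk1.
  move=> {}l hl IH.
  have {}hl : (1 <= l <= k)%N by lia.
  have Ev0 (r : 'I_(t l)) : (0 <= r)%N ->
      \sum_s map_mx phi (E l) r s * (fun s : 'I_(t l) => bent v l s) s = 0.
    move=> _; have /esym := pencil_map_mul_blk b v phi0 hl (ltn_ord r).
    rewrite Mv0 ent0 (_ : (if _ then _ else _) = 0); last first.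
      by case: ifP => // _; rewrite big1 // => s _; rewrite IH ?mulr0.
    rewrite add0r => /eqP; rewrite mulf_eq0 (negPf b_neq0) => /eqP Ev0.
    by rewrite -[RHS]Ev0; apply: eq_bigr => s _; rewrite mxE ent_ord.
  move=> s hs; apply: (upper_trig_solve_tail _ _ Ev0 (s := Ordinal hs)) => //.
    by move=> i j hij; rewrite mxE (proj1 (E_upper_unit hl)) // phi0.
  by move=> i; rewrite mxE phi_neq0 // E_diag.
apply/matrixP => i j; rewrite (ord1 j) mxE.
have [l [s [hl hs iE]]] := boff_decomp (ltn_ord i).
by rewrite -ent_ord iE; apply: blk0 hs; lia.
Qed.

Lemma rank_pencil_map (F : fieldType) (phi : C -> F) b :
  phi 0 = 0 -> (forall x, x != 0 -> phi x != 0) -> b != 0 ->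
  \rank (pencil_map phi b) = n.
Proof. by move=> phi0 phi_neq0 b_neq0; apply/mxrank_col_inj/pencil_map_inj. Qed.

Lemma rankF_pencil : rankF (pencil k E Ahat) = n.
Proof.
rewrite /rankF tofrac_pencil rank_pencil_map /tofracP ?rmorph0 //.
- by move=> x; rewrite tofrac_eq0 polyC_eq0.
- by rewrite tofrac_eq0 polyX_eq0.
Qed.

Lemma blk_last g : (boff t k <= g < n)%N -> blk t k g = k.
Proof.
move=> /andP [hkg hgn]; have [l [s [hl hs gE]]] := boff_decomp hgn.
rewrite gE blk_boff //; apply/eqP; rewrite eqn_leq; case/andP: hl => hl1 -> /=.
rewrite leqNgt; apply/negP => hlk.
by have := leq_boff t hlk; rewrite boffS //; lia.
Qed.

Lemma blk_le g : (blk t k g <= k)%N.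
Proof. by apply/bigmax_leqP => i _; rewrite -ltnS. Qed.

Lemma A0mx_last_rows (g h : 'I_n) : (boff t k <= g)%N -> A0mx k Ahat g h = 0.
Proof.
move=> hkg; rewrite mxE (@blk_last g) ?hkg ?ltn_ord //.
by case: eqP => // hk; have := blk_le h; lia.
Qed.

Lemma pencil_eigenvalueP mu : is_eigenvalue (pencil k E Ahat) mu <-> mu = 0.
Proof.
rewrite /is_eigenvalue rankF_pencil evalmx_pencil; split => [rank_lt | ->].
  by apply/eqP; apply: contraLR rank_lt => mu_neq0; rewrite rank_pencil_map ?ltnn.
have -> : pencil_map id 0 = map_mx id (A0mx k Ahat)
  by rewrite /pencil_map scale0r addr0.
apply: (@leq_ltn_trans (boff t k)).
  by apply: mxrank_zero_rows => g h hg; rewrite mxE A0mx_last_rows.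
rewrite /nsum -/(boff t k.+1) boffS //; lia.
Qed.

Lemma Ablk_ent l r s : (r < t l)%N -> (s < t l.+1)%N ->
  ent (Ablk Ahat l) r s = ent (Ahat l) r s.
Proof. by move=> hr hs; rewrite (ent_nat _ hr hs) mxE. Qed.

Lemma Ablk_upper l : (1 <= l < k)%N -> ent_upper (Ablk Ahat l).
Proof.
move=> hl r s hsr; case: (ltnP r (t l)) => hr; last exact: ent_row_oob.
case: (ltnP s (t l.+1)) => hs; last exact: ent_col_oob.
by rewrite Ablk_ent //; apply: (upper_tri_ent (proj1 (A_upper_unit hl))).
Qed.

Lemma Ablk_diag l s : (1 <= l < k)%N -> (s < t l.+1)%N -> ent (Ablk Ahat l) s s != 0.
Proof.
move=> hl hs; have hs' := leq_trans hs (t_decr hl).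
by rewrite Ablk_ent // (ent_nat _ hs hs); apply: A_diag.
Qed.

Lemma Zhat_upper l : (1 <= l < k)%N ->
  ent_upper (Zhat E Ahat l) /\ forall s, (s < t l.+1)%N -> ent (Zhat E Ahat l) s s != 0.
Proof.
move=> hl; have hl' : (1 <= l <= k)%N by lia.
have [uEV EVdiag] := invmx_upper_tri (proj1 (E_upper_unit hl')) (proj2 (E_upper_unit hl')).
split=> [r c hcr | s hs]; rewrite /Zhat entN.
  by rewrite (ent_upper_mul uEV (Ablk_upper hl)) ?oppr0.
have hs' := leq_trans hs (t_decr hl).
by rewrite oppr_eq0 (ent_upper_mul_diag uEV (Ablk_upper hl) hs') mulf_neq0 ?EVdiag ?Ablk_diag.
Qed.

Lemma Zprod_upper l d : (1 <= l)%N -> (d + l <= k)%N ->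
  ent_upper (Zprod E Ahat l d) /\
  forall c, (c < t (d + l))%N -> ent (Zprod E Ahat l d) c c != 0.
Proof.
move=> hl; elim: d => [|d IH] hd.
  by split=> [|c hc]; [exact: ent_upper_scalar1 | rewrite /= ent_scalar1 eqxx hc oner_eq0].
have [uZ Zdiag] := IH ltac:(lia).
have [uZh Zhdiag] := Zhat_upper (l := (d + l)%N) ltac:(lia).
split=> [|c hc]; first exact: ent_upper_mul.
have hc' : (c < t (d + l))%N.
  by rewrite addSn in hc; apply: leq_trans hc (t_decr _); lia.
by rewrite /= (ent_upper_mul_diag uZ uZh hc') mulf_neq0 ?Zdiag ?Zhdiag.
Qed.

(* Stated entrywise: the column sizes [t (d.+1 + l)] and [t (d + l.+1)] of the
   two sides are equal but not convertible. *)
Lemma Zprod_recl l d r c :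
  ent (Zprod E Ahat l d.+1) r c = ent (Zhat E Ahat l *m Zprod E Ahat l.+1 d) r c.
Proof.
elim: d r c => [|d IH] r c; first by rewrite /= mul1mx mulmx1.
rewrite [LHS]ent_mul [RHS]ent_mul.
under eq_bigr => u _ do rewrite IH ent_mul mulr_suml.
rewrite exchange_big /=; apply: eq_bigr => s _.
rewrite [ent (_ *m Zhat _ _ (d + l.+1)) _ _]ent_mul mulr_sumr.
have Zhat_eq i j u : i = j -> ent (Zhat E Ahat i) u c = ent (Zhat E Ahat j) u c by move->.
have shift : d.+1 + l = d + l.+1 :> nat by apply: addSnnS.
under eq_bigr => u _ do rewrite (Zhat_eq _ _ u shift).
by rewrite shift; apply: eq_bigr => u _; rewrite mulrA.
Qed.

Lemma E_Zprod l d r c : (1 <= l <= k)%N ->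
  ent (E l *m Zprod E Ahat l d.+1) r c = - ent (Ablk Ahat l *m Zprod E Ahat l.+1 d) r c.
Proof.
move=> hl; rewrite ent_mul; under eq_bigr => s _ do rewrite Zprod_recl.
have E_Zhat : E l *m Zhat E Ahat l = - Ablk Ahat l.
  by rewrite /Zhat mulmxN mulmxA mulmxV ?mul1mx //; exact: (proj2 (E_upper_unit hl)).
by rewrite -ent_mul mulmxA E_Zhat mulNmx entN.
Qed.

Section QcatColumn.
Variable c : 'I_(t 1).
Local Notation q := (qblk t k c).

Lemma qblk_bounds : [/\ (1 <= q <= k)%N, (c < t q)%N & (t q.+1 <= c)%N].
Proof. exact: qblk_spec. Qed.

Lemma Qcat_ent l s : (1 <= l <= k)%N -> (s < t l)%N ->
  ent (Qcat k E Ahat) (boff t l + s)%N c =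
  if (l <= q)%N then 'X^(l.-1) * (ent (Zprod E Ahat l (q - l)) s c)%:P else 0.
Proof.
move=> hl hs; have [hq hcq hqc] := qblk_bounds; have hg := boff_lt_nsum hl hs.
rewrite (ent_ord _ (Ordinal hg)) mxE /=.
have hc' : (c - t q.+1 < t q - t q.+1)%N by lia.
rewrite (ent_nat _ hg hc') mxE /= subnK // (ent_nat _ hg hcq) mxE /=.
by rewrite blk_boff // loc_boff.
Qed.

Lemma mul_Qcat_blk l m (M : 'M[C]_(m, t l)) r : (1 <= l <= k)%N ->
  \sum_(s < t l) (ent M r s)%:P * bent (col c (Qcat k E Ahat)) l s =
  if (l <= q)%N then 'X^(l.-1) * (ent (M *m Zprod E Ahat l (q - l)) r c)%:P else 0.
Proof.
move=> hl; under eq_bigr => s _ do rewrite ent_col Qcat_ent //.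
case: ifP => _; last by rewrite big1 // => s _; rewrite mulr0.
rewrite ent_mul rmorph_sum mulr_sumr; apply: eq_bigr => s _.
by rewrite rmorphM mulrCA.
Qed.

Definition Qcat_residual : 'cV[{poly C}]_n :=
  \col_g (if blk t k g == q then (ent (E q) (loc t k g) c)%:P else 0).

Lemma Qcat_residual_blk l r : (1 <= l <= k)%N -> (r < t l)%N ->
  bent Qcat_residual l r = if l == q then (ent (E l) r c)%:P else 0.
Proof.
move=> hl hr; rewrite (ent_nat _ (boff_lt_nsum hl hr) (ltn0Sn 0)) mxE /=.
by rewrite blk_boff // loc_boff //; case: eqP => // ->.
Qed.

Lemma pencil_mul_Qcat_col :
  pencil k E Ahat *m col c (Qcat k E Ahat) = 'X^q *: Qcat_residual.
Proof.
have [hq hcq hqc] := qblk_bounds.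
apply/matrixP => i j; rewrite (ord1 j).
have [l [r [hl hr iE]]] := boff_decomp (ltn_ord i).
rewrite -!ent_ord iE entZ Qcat_residual_blk //.
rewrite pencil_mapE pencil_map_mul_blk // [X in 'X * X]mul_Qcat_blk //.
have -> : (if (l < k)%N then \sum_(s < t l.+1) (ent (Ablk Ahat l) r s)%:P *
            bent (col c (Qcat k E Ahat)) l.+1 s else 0) =
          if (l < q)%N then 'X^l * (ent (Ablk Ahat l *m Zprod E Ahat l.+1 (q - l.+1)) r c)%:P
          else 0.
  by case: ifP => hlk; [rewrite mul_Qcat_blk //; lia | rewrite ifF //; lia].
have [hlq | hql | <-] := ltngtP l q; rewrite ?mulr0 ?add0r //.
  rewrite mulrA -exprS prednK; last by lia.
  rewrite (_ : q - l = (q - l.+1).+1)%N; last by lia.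
  by rewrite E_Zprod // -mulrDr rmorphN addrN mulr0.
by rewrite mulrA -exprS prednK ?subnn ?mulmx1 //; lia.
Qed.

Lemma Qcat_eval0 l s : (1 <= l <= k)%N -> (s < t l)%N ->
  (ent (Qcat k E Ahat) (boff t l + s)%N c).[0] =
  if l == 1%N then ent (Zprod E Ahat 1 (q - 1)) s c else 0.
Proof.
move=> hl hs; have [hq _ _] := qblk_bounds; rewrite Qcat_ent //.
case: eqP => [-> | /eqP l_neq1]; first by rewrite ifT ?mul1r ?hornerC //; lia.
case: ifP => _; last by rewrite horner0.
by rewrite hornerM hornerXn expr0n /= (_ : (l.-1 == 0)%N = false) ?mul0r //; lia.
Qed.

Lemma Qcat_eval0_top s : (s < t 1)%N ->
  (ent (Qcat k E Ahat) s c).[0] = ent (Zprod E Ahat 1 (q - 1)) s c.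
Proof.
by move=> hs; have := @Qcat_eval0 1 s ltac:(lia) hs; rewrite boff1 add0n eqxx.
Qed.

Lemma Zprod_top_upper :
  ent_upper (Zprod E Ahat 1 (q - 1)) /\ ent (Zprod E Ahat 1 (q - 1)) c c != 0.
Proof.
have [hq hcq _] := qblk_bounds.
have [uZ Zdiag] := @Zprod_upper 1 (q - 1) isT ltac:(lia).
by split=> //; apply: Zdiag; rewrite subnK //; lia.
Qed.

Lemma Qcat_eval0_lower i : (c < i)%N -> (ent (Qcat k E Ahat) i c).[0] = 0.
Proof.
move=> hci; case: (ltnP i n) => hin; last by rewrite ent_row_oob // horner0.
have [l [s [hl hs iE]]] := boff_decomp hin; subst i.
rewrite Qcat_eval0 //; case: eqP => // l1; rewrite l1 boff1 add0n in hci.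
exact: (proj1 Zprod_top_upper).
Qed.

Lemma Qcat_col_zero_direction :
  zero_direction (pencil k E Ahat) 0 (col c (Qcat k E Ahat)) q.
Proof.
have [hq hcq _] := qblk_bounds; split; first by lia.
  have hcn : (c < n)%N.
    by have := @boff_lt_nsum t k 1 c ltac:(lia) (ltn_ord c); rewrite boff1.
  apply: contraTneq (proj2 Zprod_top_upper) => /matrixP /(_ (Ordinal hcn) 0).
  by rewrite evalmx_ent mxE ent_col /= Qcat_eval0_top ?ltn_ord // => ->; rewrite eqxx.
exists Qcat_residual; split; first by rewrite subr0 pencil_mul_Qcat_col.
have hg := boff_lt_nsum hq hcq.
apply: contraTneq (E_diag hq (Ordinal hcq)) => /matrixP /(_ (Ordinal hg) 0).
by rewrite evalmx_ent mxE Qcat_residual_blk // eqxx hornerC -ent_ord => ->; rewrite eqxx.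
Qed.

End QcatColumn.

Lemma rank_Qcat_eval0 : \rank (evalmx (Qcat k E Ahat) 0) = t 1.
Proof.
apply: mxrank_col_inj => v Qv0.
pose U : 'M[C]_(t 1) := \matrix_(r, c) ent (Zprod E Ahat 1 (qblk t k c - 1)) r c.
have Uv0 (r : 'I_(t 1)) : (0 <= r)%N -> \sum_c U r c * (fun c => v c 0) c = 0.
  move=> _; have hrn : (r < n)%N.
    by have := @boff_lt_nsum t k 1 r ltac:(lia) (ltn_ord r); rewrite boff1.
  have /matrixP /(_ (Ordinal hrn) 0) := Qv0; rewrite mxE [RHS]mxE => Qv.
  by rewrite -[RHS]Qv; apply: eq_bigr => c _; rewrite evalmx_ent /= Qcat_eval0_top // mxE.
apply/matrixP => c j; rewrite (ord1 j) mxE.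
apply: (upper_trig_solve_tail _ _ Uv0 (s := c)) => // [r c' hc'r | c'].
  by rewrite mxE (proj1 (Zprod_top_upper c')).
by rewrite mxE (proj2 (Zprod_top_upper c')).
Qed.

Lemma pencil_coef_blk (x w : 'cV[{poly C}]_n) kk l r i :
  pencil k E Ahat *m x = 'X^kk *: w -> (1 <= l <= k)%N -> (r < t l)%N -> (i < kk)%N ->
  (if (l < k)%N then \sum_(s < t l.+1) ent (Ablk Ahat l) r s * (bent x l.+1 s)`_i
   else 0) +
  (if i is i'.+1 then \sum_(s < t l) ent (E l) r s * (bent x l s)`_i' else 0) = 0.
Proof.
move=> Mx hl hr hi; have := pencil_map_mul_blk 'X x (polyC0 _) hl hr.
rewrite -pencil_mapE Mx entZ => /(congr1 (coefp i)) /=; rewrite coefXnM hi => /esym.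
rewrite coefD coefXM; congr (_ + _ = _).
  by case: ifP => _; rewrite ?coef0 // coef_sum; apply: eq_bigr => s _; rewrite coefCM.
by case: i hi => [|i] hi //=; rewrite coef_sum; apply: eq_bigr => s _; rewrite coefCM.
Qed.

(* The constant term of [P x = X^kk w] is [A0 x(0) = 0], and the invertible
   [Ahat_l] make [A0] injective on the coordinates past the first block. *)
Lemma pencil_kernel_coef0_tail (x w : 'cV[{poly C}]_n) kk :
  pencil k E Ahat *m x = 'X^kk *: w -> (1 <= kk)%N ->
  forall h, (t 1 <= h)%N -> (ent x h 0)`_0 = 0.
Proof.
move=> Mx kk_gt0 h hh; case: (ltnP h n) => hn; last by rewrite ent_row_oob // coef0.
have [[|l] [s [hl hs hE]]] := boff_decomp hn; first by lia.
have l_pos : (0 < l)%N.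
  by case: l hl hs hE => [|l] // _ hs hE; move: hh; rewrite hE boff1; lia.
have {}hl : (1 <= l < k)%N by lia.
have Av0 (r : 'I_(t l.+1)) : (0 <= r)%N ->
    \sum_s Ahat l r s * (fun s : 'I_(t l.+1) => (bent x l.+1 s)`_0) s = 0.
  move=> _; have hr := leq_trans (ltn_ord r) (t_decr hl).
  have := pencil_coef_blk (l := l) (i := 0) Mx ltac:(lia) hr kk_gt0.
  rewrite ifT ?addr0; last by case/andP: hl.
  by move=> Av; rewrite -[RHS]Av; apply: eq_bigr => s' _; rewrite Ablk_ent // ent_ord.
rewrite hE; apply: (upper_trig_solve_tail _ _ Av0 (s := Ordinal hs)) => //.
  exact: (proj1 (A_upper_unit hl)).
exact: A_diag.
Qed.

(* For [l <= q < kk] the coefficient of [X^l] in block row [l] gives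
   [E_ll x_l[l-1] = - A_{l,l+1} x_{l+1}[l]]; by triangularity, vanishing from row
   [t_{q+1}] on propagates from block [q + 1] (where it is vacuous) down to block [1]. *)
Lemma pencil_high_order_coef0_tail (x w : 'cV[{poly C}]_n) kk q :
  pencil k E Ahat *m x = 'X^kk *: w -> (1 <= q <= k)%N -> (q < kk)%N ->
  forall s, (t q.+1 <= s < t 1)%N -> (ent x s 0)`_0 = 0.
Proof.
move=> Mx hq hqkk.
pose P l := forall s, (t q.+1 <= s)%N -> (s < t l)%N -> (bent x l s)`_(l.-1) = 0.
suff P1 : P 1%N by move=> s /andP [hs1 hs2]; have := P1 s hs1 hs2; rewrite boff1.
apply: (@down_ind P 1 q.+1); [by move=> s; lia | | by lia].
move=> [|l] hl IH; first by lia.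
have hlk : (1 <= l.+1 <= k)%N by lia.
have Ev0 (r : 'I_(t l.+1)) : (t q.+1 <= r)%N ->
    \sum_s E l.+1 r s * (fun s : 'I_(t l.+1) => (bent x l.+1 s)`_l) s = 0.
  move=> hr; have := pencil_coef_blk (i := l.+1) Mx hlk (ltn_ord r) ltac:(lia).
  have -> : (if (l.+1 < k)%N then \sum_(s < t l.+2)
      ent (Ablk Ahat l.+1) r s * (bent x l.+2 s)`_l.+1 else 0) = 0.
    case: ifP => // hlk'; rewrite big1 // => s _.
    have [hsr | hrs] := ltnP s r; first by rewrite (Ablk_upper _ hsr) ?mul0r //; lia.
    by rewrite (IH s) ?mulr0 //; apply: leq_trans hr hrs.
  by rewrite add0r => Ev; rewrite -[RHS]Ev; apply: eq_bigr => s _; rewrite ent_ord.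
move=> s hs1 hs2; apply: (upper_trig_solve_tail _ _ Ev0 (s := Ordinal hs2)) => //.
  exact: (proj1 (E_upper_unit hlk)).
exact: E_diag.
Qed.

Lemma zero_direction_eval0_rows (x : 'cV[{poly C}]_n) kk :
  zero_direction (pencil k E Ahat) 0 x kk ->
  forall i : 'I_n, (t 1 <= i)%N -> evalmx x 0 i 0 = 0.
Proof.
case=> kk_gt0 _ [w [Mx _]] i hi; rewrite subr0 in Mx.
by rewrite evalmx_ent horner_coef0 (pencil_kernel_coef0_tail Mx).
Qed.

Lemma high_order_zero_direction_eval0_rows (x : 'cV[{poly C}]_n) kk q :
  zero_direction (pencil k E Ahat) 0 x kk -> (1 <= q <= k)%N -> (q < kk)%N ->
  forall i : 'I_n, (t q.+1 <= i)%N -> evalmx x 0 i 0 = 0.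
Proof.
move=> zd hq hqkk i hi; have [hi1 | hi1] := ltnP i (t 1).
  case: zd => _ _ [w [Mx _]]; rewrite subr0 in Mx.
  by rewrite evalmx_ent horner_coef0 (pencil_high_order_coef0_tail Mx hq hqkk) ?hi.
exact: zero_direction_eval0_rows zd i hi1.
Qed.

Lemma full_col_rank_thin m s (N : 'M[{poly C}]_(m, 0)) (R : 'M_(m, s)) mu :
  full_col_rank (evalmx (row_mx N R) mu) <-> \rank (evalmx R mu) = s.
Proof. by rewrite /full_col_rank /evalmx row_thin_mx. Qed.

Lemma right_minimal_basis_pencil p (N : 'M[{poly C}]_(n, p)) :
  is_right_minimal_basis (pencil k E Ahat) N -> p = 0%N.
Proof.
case=> [[_ _]]; rewrite rankF_pencil => /eqP.
by rewrite -{2}[n]add0n eqn_add2r => /eqP.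
Qed.

Lemma Qord_ordered : ordered_set (@Qord t k).
Proof.
split=> [i j hij | c]; first exact: qblk_mono.
by have [/andP [] ] := qblk_bounds c.
Qed.

Lemma Qcat_complete (N : 'M[{poly C}]_(n, 0)) :
  complete_set (pencil k E Ahat) N 0 (Qcat k E Ahat) (@Qord t k).
Proof.
split.
  split; first exact: Qcat_col_zero_direction.
  by apply/full_col_rank_thin; exact: rank_Qcat_eval0.
move=> s R ord [zd /full_col_rank_thin <-].
apply: mxrank_zero_rows => i j hi.
by rewrite -[RHS](zero_direction_eval0_rows (zd j) hi) !mxE.
Qed.

Lemma Qcat_maximal (N : 'M[{poly C}]_(n, 0)) (j : 'I_(t 1)) :
  ~ exists (x : 'cV[{poly C}]_n) (kk : nat),
    [/\ root_polynomial (pencil k E Ahat) N 0 x kk, (@Qord t k j < kk)%N &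
        full_col_rank (evalmx (row_mx N (row_mx (first_cols (Qcat k E Ahat) j) x)) 0)].
Proof.
case=> x [kk [[zd _] hkk /full_col_rank_thin rank_full]].
have [hq _ hqj] := qblk_bounds j.
suff : (\rank (evalmx (row_mx (first_cols (Qcat k E Ahat) j) x) 0) <= j)%N.
  by rewrite rank_full addn1 ltnn.
apply: mxrank_zero_rows => i c hi; rewrite mxE -(splitK c).
case: (split c) => c' /=; rewrite ?row_mxEl ?row_mxEr.
  rewrite mxE -(ent_ord (Qcat k E Ahat)) Qcat_eval0_lower //=.
  exact: leq_trans (ltn_ord c') hi.
rewrite (ord1 c') -ent_ord -evalmx_ent.
exact: high_order_zero_direction_eval0_rows zd hq hkk _ (leq_trans hqj hi).
Qed.

Lemma maximal_set_Qcat p (N : 'M[{poly C}]_(n, p)) :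
  is_right_minimal_basis (pencil k E Ahat) N ->
  maximal_set (pencil k E Ahat) N 0 (Qcat k E Ahat) (@Qord t k).
Proof.
move=> /right_minimal_basis_pencil p0; subst p.
by split; [exact: Qcat_complete | exact: Qord_ordered | exact: Qcat_maximal].
Qed.

End Pencil.

Unset Implicit Arguments.

Theorem theorem5p10 (C : numClosedFieldType) (k : nat) (t : nat -> nat)
    (E : forall i, 'M[C]_(t i)) (Ahat : forall i, 'M[C]_(t i.+1)) :
  (1 <= k)%N ->
  (forall i, (1 <= i < k)%N -> (t i.+1 <= t i)%N) ->
  (1 <= t k)%N ->
  t k.+1 = 0%N ->
  (forall i, (1 <= i <= k)%N -> upper_tri (E i) /\ E i \in unitmx) ->
  (forall i, (1 <= i < k)%N -> upper_tri (Ahat i) /\ Ahat i \in unitmx) ->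
  (forall mu : C, is_eigenvalue (pencil k E Ahat) mu <-> mu = 0) /\
  (forall (p : nat) (N : 'M[{poly C}]_(nsum t k, p)),
     is_right_minimal_basis (pencil k E Ahat) N ->
     maximal_set (pencil k E Ahat) N 0 (Qcat k E Ahat) (@Qord t k)).
Proof.
move=> k_gt0 t_decr tk_gt0 tk1 E_upper_unit A_upper_unit; split.
  by move=> mu; apply: pencil_eigenvalueP.
by move=> p N; apply: maximal_set_Qcat.
Qed.
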